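(* Let $A\in\mathbb{R}^{n\times n}$ be symmetric, $\beta>0$, $f(\mathbf{z})=\frac12\mathbf{z}^TA\mathbf{z}+\frac{\beta}{2}\sum_kz_k^4$ on $\mathbb{S}^{n-1}$. Let $\nu\in(0,1]$, $\mathbf{z}_0\in\mathbb{S}^{n-1}$ and $\mathcal{R}_\nu=\{\mathbf{z}\in\mathbb{S}^{n-1}:\|\mathbf{z}-\mathbf{z}_0\|^2\le\nu\}$. If $H_f(\mathbf{z})[\mathbf{v}]>0$ for all $\mathbf{v}\in\mathcal{T}_{\mathbf{z}}\setminus\{0\}$ and all $\mathbf{z}\in\mathcal{R}_\nu$, then the problem $\min_{\mathbf{z}\in\mathcal{R}_\nu}f(\mathbf{z})$ has at most one local minimizer.
   Context: $\mathbb{S}^{n-1}$ is the unit sphere in $\mathbb{R}^n$; $\mathcal{T}_{\mathbf{z}}=\{\mathbf{v}\in\mathbb{R}^n:\mathbf{v}^T\mathbf{z}=0\}$; $H_f(\mathbf{z})[\mathbf{v}]=\mathbf{v}^T[A+6\beta\,\mathrm{diag}(z_1^2,\dots,z_n^2)-2\lambda I]\mathbf{v}$ with $2\lambda=\mathbf{z}^TA\mathbf{z}+2\beta\|\mathbf{z}\|_4^4$ (the Riemannian Hessian quadratic form). *)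

From mathcomp Require Import all_boot all_order all_algebra.
From mathcomp Require Import reals.
Set Implicit Arguments. Unset Strict Implicit. Unset Printing Implicit Defensive.
Import Order.TTheory GRing.Theory Num.Theory.
Local Open Scope ring_scope.

Section Defs.
Variables (R : realType) (n : nat).

Definition sqnorm (z : 'cV[R]_n) : R := \sum_(i < n) z i 0 ^+ 2.
Definition enorm (z : 'cV[R]_n) : R := Num.sqrt (sqnorm z).
Definition norm4_4 (z : 'cV[R]_n) : R := \sum_(i < n) z i 0 ^+ 4.
Definition qform (M : 'M[R]_n) (v : 'cV[R]_n) : R := (v^T *m M *m v) 0 0.

Definition on_sphere (z : 'cV[R]_n) : Prop := enorm z = 1.
Definition tangent (z v : 'cV[R]_n) : Prop := (v^T *m z) 0 0 = 0.

Definition fobj (A : 'M[R]_n) (beta : R) (z : 'cV[R]_n) : R :=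
  qform A z / 2 + beta / 2 * norm4_4 z.

Definition two_lambda (A : 'M[R]_n) (beta : R) (z : 'cV[R]_n) : R :=
  qform A z + 2 * beta * norm4_4 z.

Definition hessf (A : 'M[R]_n) (beta : R) (z v : 'cV[R]_n) : R :=
  qform (A + (6 * beta) *: diag_mx (\row_i (z i 0 ^+ 2)) - (two_lambda A beta z)%:M) v.

Definition region (z0 : 'cV[R]_n) (nu : R) (z : 'cV[R]_n) : Prop :=
  on_sphere z /\ enorm (z - z0) ^+ 2 <= nu.

Definition local_minimizer (S : 'cV[R]_n -> Prop) (g : 'cV[R]_n -> R)
  (z : 'cV[R]_n) : Prop :=
  S z /\ exists eps : R, 0 < eps /\
    forall w, S w -> enorm (w - z) < eps -> g z <= g w.

End Defs.

(* Suppose z1 <> z2 are local minimizers. The region is the spherical cap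
   <z, z0> >= 1 - nu/2 > 0, so z1 and z2 are not antipodal and the shorter
   great-circle arc g : [0, th] -> S^{n-1} from z1 to z2 stays in it.  Since
   g (c +- r) = cos r g c +- sin r g' c with g' c a unit tangent vector at g c,
     f (g (c + r)) + f (g (c - r)) - 2 f (g c) = sin^2 r (H_f(g c)[g' c] + O(sin^2 r)),
   so h := f o g is strictly midpoint convex near every interior point of [0, th].
   But h is continuous with local minima at both endpoints, hence attains its
   maximum at an interior point, where this is impossible. *)

From mathcomp Require Import all_boot all_order all_algebra.
From mathcomp Require Import all_classical all_reals all_analysis.
From mathcomp Require Import ring lra.
Import Order.TTheory GRing.Theory Num.Theory.
Import numFieldNormedType.Exports.
Local Open Scope ring_scope.
Local Open Scope classical_set_scope.
Set Implicit Arguments. Unset Strict Implicit. Unset Printing Implicit Defensive.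

Section QuadraticQuartic.
Variables (R : realType) (n : nat).
Implicit Types (x y z v w : 'cV[R]_n) (M : 'M[R]_n) (a b c s : R).

Definition dot x y : R := (x^T *m y) 0 0.
Definition cross4 x y : R := \sum_(i < n) x i 0 ^+ 2 * y i 0 ^+ 2.

Lemma dotC x y : dot x y = dot y x.
Proof. by rewrite /dot -[x^T *m y]trmxK trmx_mul trmxK mxE. Qed.

Lemma dotDl x y w : dot (x + y) w = dot x w + dot y w.
Proof. by rewrite /dot raddfD mulmxDl mxE. Qed.

Lemma dotBl x y w : dot (x - y) w = dot x w - dot y w.
Proof. by rewrite /dot raddfB mulmxBl !mxE. Qed.

Lemma dotNl x w : dot (- x) w = - dot x w.
Proof. by rewrite /dot raddfN mulNmx mxE. Qed.

Lemma dotZl a x w : dot (a *: x) w = a * dot x w.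
Proof. by rewrite /dot linearZ -scalemxAl mxE. Qed.

Lemma dotDr x y w : dot w (x + y) = dot w x + dot w y.
Proof. by rewrite dotC dotDl !(dotC w). Qed.

Lemma dotBr x y w : dot w (x - y) = dot w x - dot w y.
Proof. by rewrite dotC dotBl !(dotC w). Qed.

Lemma dotZr a x w : dot w (a *: x) = a * dot w x.
Proof. by rewrite dotC dotZl dotC. Qed.

Lemma sqnorm_dot x : sqnorm x = dot x x.
Proof. by rewrite /dot mxE; apply: eq_bigr => i _; rewrite mxE expr2. Qed.

Lemma sqnorm_ge0 x : 0 <= sqnorm x.
Proof. by apply: sumr_ge0 => i _; rewrite sqr_ge0. Qed.

Lemma sqnorm_eq0 x : (sqnorm x == 0) = (x == 0).
Proof.
apply/idP/eqP => [/eqP x0 | ->]; last by rewrite /sqnorm big1 // => i _; rewrite mxE expr0n.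
apply/matrixP => i j; rewrite ord1 mxE; apply/eqP; rewrite -sqrf_eq0.
by rewrite (psumr_eq0P _ x0) // => k _; rewrite sqr_ge0.
Qed.

Lemma sqnormD x y : sqnorm (x + y) = sqnorm x + 2 * dot x y + sqnorm y.
Proof. by rewrite !sqnorm_dot dotDl !dotDr (dotC y x); ring. Qed.

Lemma sqnormB x y : sqnorm (x - y) = sqnorm x - 2 * dot x y + sqnorm y.
Proof. by rewrite !sqnorm_dot dotBl !dotBr (dotC y x); ring. Qed.

Lemma enorm_sqr x : enorm x ^+ 2 = sqnorm x.
Proof. by rewrite sqr_sqrtr // sqnorm_ge0. Qed.

Lemma enorm_lt x e : 0 < e -> sqnorm x < e ^+ 2 -> enorm x < e.
Proof. by move=> e_gt0 lt_xe; rewrite -(@ltr_pXn2r _ 2) ?enorm_sqr // nnegrE ?sqrtr_ge0 ?ltW. Qed.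

Lemma on_sphereE x : on_sphere x <-> sqnorm x = 1.
Proof.
rewrite /on_sphere /enorm; split => [h | ->]; last by rewrite sqrtr1.
by rewrite -[sqnorm x]sqr_sqrtr ?sqnorm_ge0 // h expr1n.
Qed.

Lemma qformE M x : qform M x = \sum_i \sum_j x i 0 * M i j * x j 0.
Proof.
rewrite /qform mxE; under eq_bigr => j _ do rewrite mxE big_distrl /=.
by rewrite exchange_big; apply: eq_bigr => i _; apply: eq_bigr => j _; rewrite mxE.
Qed.

Lemma qformZr a M x : qform M (a *: x) = a ^+ 2 * qform M x.
Proof. by rewrite /qform [(a *: x)^T]linearZ -!scalemxAl -scalemxAr !mxE mulrA expr2. Qed.

Lemma qformDl M N x : qform (M + N) x = qform M x + qform N x.
Proof. by rewrite /qform mulmxDr mulmxDl mxE. Qed.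

Lemma qformBl M N x : qform (M - N) x = qform M x - qform N x.
Proof. by rewrite /qform mulmxBr mulmxBl !mxE. Qed.

Lemma qformZl a M x : qform (a *: M) x = a * qform M x.
Proof. by rewrite /qform -scalemxAr -scalemxAl mxE. Qed.

Lemma qform_diag (d : 'rV[R]_n) x : qform (diag_mx d) x = \sum_i d 0 i * x i 0 ^+ 2.
Proof. by rewrite /qform mul_mx_diag mxE; apply: eq_bigr => i _; rewrite !mxE; ring. Qed.

Lemma qform_scalar a x : qform a%:M x = a * sqnorm x.
Proof. by rewrite /qform mul_mx_scalar -scalemxAl mxE sqnorm_dot. Qed.

Lemma qform_parallelogram M x y :
  qform M (x + y) + qform M (x - y) = 2 * (qform M x + qform M y).
Proof.
rewrite !qformE -!big_split mulr_sumr; apply: eq_bigr => i _ /=.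
rewrite -!big_split mulr_sumr; apply: eq_bigr => j _ /=; rewrite !mxE; ring.
Qed.

Lemma norm4_4Z a x : norm4_4 (a *: x) = a ^+ 4 * norm4_4 x.
Proof. by rewrite /norm4_4 mulr_sumr; apply: eq_bigr => i _; rewrite mxE exprMn. Qed.

Lemma cross4Z a b x y : cross4 (a *: x) (b *: y) = a ^+ 2 * b ^+ 2 * cross4 x y.
Proof. by rewrite /cross4 mulr_sumr; apply: eq_bigr => i _; rewrite !mxE; ring. Qed.

Lemma norm4_4_parallelogram x y :
  norm4_4 (x + y) + norm4_4 (x - y) = 2 * (norm4_4 x + 6 * cross4 x y + norm4_4 y).
Proof.
rewrite /norm4_4 /cross4 mulr_sumr -!big_split /= mulr_sumr.
by apply: eq_bigr => i _; rewrite !mxE; ring.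
Qed.

Lemma hessfE A beta z v :
  hessf A beta z v = qform A v + 6 * beta * cross4 z v - two_lambda A beta z * sqnorm v.
Proof.
rewrite /hessf qformBl qformDl qformZl qform_diag qform_scalar /cross4.
by congr (_ + _ * _ - _); apply: eq_bigr => i _; rewrite mxE.
Qed.

Lemma fobj_second_difference A beta z v c s :
  c ^+ 2 + s ^+ 2 = 1 -> sqnorm v = 1 ->
  fobj A beta (c *: z + s *: v) + fobj A beta (c *: z - s *: v) - 2 * fobj A beta z =
  s ^+ 2 * (hessf A beta z v + beta * s ^+ 2 * (norm4_4 z - 6 * cross4 z v + norm4_4 v)).
Proof.
move=> cs v1; have c2 : c ^+ 2 = 1 - s ^+ 2 by rewrite -cs addrK.
have c4 : c ^+ 4 = (1 - s ^+ 2) ^+ 2 by rewrite -c2 -exprM.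
rewrite /fobj addrACA -mulrDl -mulrDr qform_parallelogram norm4_4_parallelogram.
by rewrite !qformZr !norm4_4Z cross4Z c2 c4 hessfE v1 /two_lambda; field.
Qed.

End QuadraticQuartic.

Section RealFunctions.
Variable R : realType.

Lemma sinD_le (x y : R) : 0 <= x <= pi -> 0 <= y <= pi -> sin (x + y) <= sin x + sin y.
Proof.
move=> /sin_ge0_pi sx_ge0 /sin_ge0_pi sy_ge0; rewrite sinD.
have := cos_le1 x; have := cos_le1 y; nra.
Qed.

Lemma interior_argmax (h : R -> R) (a b : R) : a < b ->
  {within `[a, b], continuous h} ->
  (\forall t \near a, a <= t <= b -> h a <= h t) ->
  (\forall t \near b, a <= t <= b -> h b <= h t) ->
  exists2 c, a < c < b & forall t, a <= t <= b -> h t <= h c.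
Proof.
move=> ab h_cont h_a h_b.
have [c] := EVT_max (ltW ab) h_cont; rewrite in_itv /= => /andP[ac cb] c_max.
have {}c_max t : a <= t <= b -> h t <= h c by move=> tab; apply: c_max; rewrite in_itv.
have [t1 t1_in ht1] : exists2 t1, a < t1 < b & h a <= h t1.
  near a^'+ => t1.
  have t1_in : a < t1 < b.
    by apply/andP; split; near: t1; [exact: nbhs_right_gt | exact: nbhs_right_lt].
  exists t1 => //; have : a <= t1 <= b -> h a <= h t1 by near: t1; exact: cvg_within h_a.
  by apply; case/andP: t1_in => *; rewrite !ltW.
have [t2 t2_in ht2] : exists2 t2, a < t2 < b & h b <= h t2.
  near b^'- => t2.
  have t2_in : a < t2 < b.
    by apply/andP; split; near: t2; [exact: nbhs_left_gt | exact: nbhs_left_lt].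
  exists t2 => //; have : a <= t2 <= b -> h b <= h t2 by near: t2; exact: cvg_within h_b.
  by apply; case/andP: t2_in => *; rewrite !ltW.
case: (eqVneq c a) => [ca | ca].
  by exists t1 => // t /c_max; rewrite ca => /le_trans->.
case: (eqVneq c b) => [cb' | cb'].
  by exists t2 => // t /c_max; rewrite cb' => /le_trans->.
by exists c => //; rewrite !lt_neqAle ac cb eq_sym ca cb'.
Unshelve. all: by end_near.
Qed.

Lemma local_minima_midpoint_convex (h : R -> R) (a b : R) :
  {within `[a, b], continuous h} ->
  (\forall t \near a, a <= t <= b -> h a <= h t) ->
  (\forall t \near b, a <= t <= b -> h b <= h t) ->
  (forall c, a < c < b -> \forall r \near 0^'+, 2 * h c < h (c + r) + h (c - r)) ->
  b <= a.
Proof.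
move=> h_cont h_a h_b h_convex; rewrite leNgt; apply/negP => ab.
have [c /andP[ac cb] c_max] := interior_argmax ab h_cont h_a h_b.
near (0 : R)^'+ => r.
have r_gt0 : 0 < r by near: r; exact: nbhs_right_gt.
have : r < Num.min (c - a) (b - c).
  by near: r; apply: nbhs_right_lt; rewrite lt_min !subr_gt0 ac cb.
rewrite lt_min => /andP[r_lt1 r_lt2].
have h_right : h (c + r) <= h c by apply: c_max; apply/andP; split; lra.
have h_left : h (c - r) <= h c by apply: c_max; apply/andP; split; lra.
have : 2 * h c < h (c + r) + h (c - r) by near: r; apply: h_convex; rewrite ac cb.
lra.
Unshelve. all: by end_near.
Qed.

End RealFunctions.

Section Sphere.
Variables (R : realType) (n : nat).
Implicit Types (x y z v w : 'cV[R]_n).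

Lemma dot_unit_lt1 x y : sqnorm x = 1 -> sqnorm y = 1 -> x != y -> dot x y < 1.
Proof.
move=> x1 y1 xy; have : 0 < sqnorm (x - y) by rewrite lt_def sqnorm_eq0 subr_eq0 xy sqnorm_ge0.
by rewrite sqnormB x1 y1; lra.
Qed.

Lemma dot_unit_gtN1 x y : sqnorm x = 1 -> sqnorm y = 1 -> x != - y -> -1 < dot x y.
Proof.
move=> x1 y1 xy; have : 0 < sqnorm (x + y) by rewrite lt_def sqnorm_eq0 addr_eq0 xy sqnorm_ge0.
by rewrite sqnormD x1 y1; lra.
Qed.

Lemma region_dotE z0 nu z : on_sphere z0 ->
  region z0 nu z <-> sqnorm z = 1 /\ 1 - nu / 2 <= dot z z0.
Proof.
move=> /on_sphereE z0_1; rewrite /region on_sphereE enorm_sqr sqnormB z0_1.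
by split=> -[z1 h]; split=> //; move: h; rewrite z1; lra.
Qed.

Section Geodesic.
Variables z1 u : 'cV[R]_n.

Definition geodesic (t : R) := cos t *: z1 + sin t *: u.
Definition geodesic_dir (t : R) := - sin t *: z1 + cos t *: u.

Lemma geodesic0 : geodesic 0 = z1.
Proof. by rewrite /geodesic cos0 sin0 scale1r scale0r addr0. Qed.

Lemma geodesicD t r : geodesic (t + r) = cos r *: geodesic t + sin r *: geodesic_dir t.
Proof. by apply/matrixP => i j; rewrite !mxE sinD cosD; ring. Qed.

Lemma geodesicB t r : geodesic (t - r) = cos r *: geodesic t - sin r *: geodesic_dir t.
Proof. by apply/matrixP => i j; rewrite !mxE sinB cosB; ring. Qed.

Lemma sin_scale_geodesic th t : sin th *: geodesic t = sin (th - t) *: z1 + sin t *: geodesic th.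
Proof. by apply/matrixP => i j; rewrite !mxE sinB; ring. Qed.

Lemma continuous_geodesic i : continuous (fun t => geodesic t i 0).
Proof.
have -> : (fun t => geodesic t i 0) = (fun t => cos t * z1 i 0 + sin t * u i 0).
  by apply: funext => t; rewrite !mxE.
move=> t; apply: cvgD; apply: cvgM;
  [exact: continuous_cos | exact: cvg_cst | exact: continuous_sin | exact: cvg_cst].
Qed.

Lemma geodesic_in_cap z0 k th t : 0 <= k -> 0 < th < pi -> 0 <= t <= th ->
  k <= dot z1 z0 -> k <= dot (geodesic th) z0 -> k <= dot (geodesic t) z0.
Proof.
move=> k_ge0 /andP[th_gt0 th_ltpi] /andP[t_ge0 t_leth] k_z1 k_th.
have sin_th : 0 < sin th by apply: sin_gt0_pi; rewrite th_gt0.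
have sin_t : 0 <= sin t by apply: sin_ge0_pi; rewrite t_ge0 /=; lra.
have sin_tht : 0 <= sin (th - t) by apply: sin_ge0_pi; apply/andP; split; lra.
have sin_sub : sin th <= sin (th - t) + sin t.
  by rewrite -[X in sin X](subrK t) sinD_le //; apply/andP; split; lra.
rewrite -(ler_pM2l sin_th) -dotZl sin_scale_geodesic dotDl !dotZl.
by nra.
Qed.

Hypotheses (z1_unit : sqnorm z1 = 1) (u_unit : sqnorm u = 1) (z1_u : dot z1 u = 0).

Lemma dot_geodesic t s : dot (geodesic t) (geodesic s) = cos (t - s).
Proof.
rewrite !(dotDl, dotDr, dotZl, dotZr) -!sqnorm_dot z1_unit u_unit (dotC u) z1_u cosB.
ring.
Qed.

Lemma sqnorm_geodesic t : sqnorm (geodesic t) = 1.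
Proof. by rewrite sqnorm_dot dot_geodesic subrr cos0. Qed.

Lemma sqnorm_geodesic_dir t : sqnorm (geodesic_dir t) = 1.
Proof.
rewrite sqnorm_dot !(dotDl, dotDr, dotZl, dotZr) -!sqnorm_dot z1_unit u_unit (dotC u) z1_u.
by have := cos2Dsin2 t; lra.
Qed.

Lemma dot_geodesic_dir t : dot (geodesic_dir t) (geodesic t) = 0.
Proof.
rewrite !(dotDl, dotDr, dotZl, dotZr) -!sqnorm_dot z1_unit u_unit (dotC u) z1_u; ring.
Qed.

Lemma sqnorm_geodesicB t s : sqnorm (geodesic t - geodesic s) = 2 - 2 * cos (t - s).
Proof. by rewrite sqnormB !sqnorm_geodesic dot_geodesic; ring. Qed.

Lemma geodesic_near s e : 0 < e -> \forall t \near s, enorm (geodesic t - geodesic s) < e.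
Proof.
move=> e_gt0.
have cos_cvg : cos (t - s) @[t --> s] --> cos (s - s).
  apply: continuous_comp; last exact: continuous_cos.
  by apply: cvgB; [exact: cvg_id | exact: cvg_cst].
have e2_gt0 : 0 < e ^+ 2 / 2 by rewrite divr_gt0 ?exprn_gt0.
move/cvgrPdist_lt/(_ _ e2_gt0): cos_cvg; apply: filterS => t.
rewrite subrr cos0 => near1; apply: enorm_lt => //; rewrite sqnorm_geodesicB.
move: near1; rewrite ltr_norml; lra.
Qed.

Lemma geodesic_local_minimizer (S : 'cV[R]_n -> Prop) (f : 'cV[R]_n -> R) s :
  local_minimizer S f (geodesic s) ->
  \forall t \near s, S (geodesic t) -> f (geodesic s) <= f (geodesic t).
Proof.
move=> [_ [e [e_gt0 f_min]]].
by apply: filterS (geodesic_near s e_gt0) => t near_t S_t; apply: f_min.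
Qed.

End Geodesic.

Lemma great_circle_through z1 z2 : sqnorm z1 = 1 -> sqnorm z2 = 1 -> -1 < dot z1 z2 < 1 ->
  exists th u, [/\ 0 < th < pi, sqnorm u = 1, dot z1 u = 0 & geodesic z1 u th = z2].
Proof.
move=> z1_unit z2_unit /andP[c_gtN1 c_lt1]; set c := dot z1 z2 in c_gtN1 c_lt1 *.
have c_in : -1 <= c <= 1 by rewrite !ltW.
have cos_th : cos (acos c) = c by rewrite acosK // in_itv.
have th_gt0 : 0 < acos c by rewrite acos_gt0 // ltW.
have th_ltpi : acos c < pi by rewrite acos_ltpi // c_gtN1 ltW.
have sin_gt0 : 0 < sin (acos c) by apply: sin_gt0_pi; rewrite th_gt0.
exists (acos c), ((sin (acos c))^-1 *: (z2 - c *: z1)); split.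
- by rewrite th_gt0.
- rewrite sqnorm_dot dotZl dotZr dotBl !dotBr !dotZl !dotZr -!sqnorm_dot z1_unit z2_unit.
  have s2 : 1 - c ^+ 2 = sin (acos c) ^+ 2 by rewrite sin2cos2 cos_th.
  rewrite (dotC z2) -/c (_ : 1 - c * c - _ = sin (acos c) ^+ 2); last by rewrite -s2; ring.
  by field; rewrite gt_eqF.
- by rewrite dotZr dotBr dotZr -sqnorm_dot z1_unit -/c mulr1 subrr mulr0.
- by rewrite /geodesic scalerA mulfV ?gt_eqF // scale1r cos_th addrC subrK.
Qed.

Lemma region_great_circle z0 nu z1 z2 : on_sphere z0 -> nu < 2 ->
  region z0 nu z1 -> region z0 nu z2 -> z1 != z2 ->
  exists th u, [/\ 0 < th < pi, sqnorm u = 1, dot z1 u = 0 & geodesic z1 u th = z2].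
Proof.
move=> z0_unit nu_lt2 /(region_dotE _ _ z0_unit)[z1_unit z1_cap].
move=> /(region_dotE _ _ z0_unit)[z2_unit z2_cap] z1_neq_z2.
apply: great_circle_through => //; rewrite dot_unit_lt1 // andbT dot_unit_gtN1 //.
by apply/eqP => z1E; move: z1_cap; rewrite z1E dotNl; lra.
Qed.

Lemma region_geodesic z0 nu z1 u th t : on_sphere z0 -> nu <= 2 ->
  sqnorm z1 = 1 -> sqnorm u = 1 -> dot z1 u = 0 -> 0 < th < pi -> 0 <= t <= th ->
  region z0 nu z1 -> region z0 nu (geodesic z1 u th) -> region z0 nu (geodesic z1 u t).
Proof.
move=> z0_unit nu_le2 z1_unit u_unit z1_u th_in t_in.
rewrite !(region_dotE _ _ z0_unit) => -[_ z1_cap] [_ th_cap].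
split; first exact: sqnorm_geodesic.
by apply: (geodesic_in_cap _ th_in t_in z1_cap th_cap); lra.
Qed.

End Sphere.

Section Objective.
Variables (R : realType) (n : nat) (A : 'M[R]_n) (beta : R).

Lemma continuous_fobj_comp (g : R -> 'cV[R]_n) :
  (forall i, continuous (fun t => g t i 0)) -> continuous (fun t => fobj A beta (g t)).
Proof.
move=> g_cont; rewrite /fobj; under eq_fun => t do rewrite qformE.
have sum_cont (F : 'I_n -> R -> R) : (forall i, continuous (F i)) ->
    continuous (fun t => \sum_i F i t).
  by move=> F_cont; apply: continuous_big => //; exact: add_continuous.
move=> t; apply: cvgD; [apply: cvgM; [|exact: cvg_cst] | apply: cvgM; [exact: cvg_cst|]].
- apply: (sum_cont) => i; apply: (sum_cont) => j s.
  by apply: cvgM; [apply: cvgM; [exact: g_cont | exact: cvg_cst] | exact: g_cont].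
- by apply: (sum_cont) => i s; exact: (continuous_comp (g_cont i s) (@exprn_continuous _ 4 _)).
Qed.

Lemma fobj_second_difference_gt0 z v : sqnorm v = 1 -> 0 < hessf A beta z v ->
  \forall r \near 0^'+, 2 * fobj A beta z <
    fobj A beta (cos r *: z + sin r *: v) + fobj A beta (cos r *: z - sin r *: v).
Proof.
move=> v_unit hess_gt0; set Q := norm4_4 z - 6 * cross4 z v + norm4_4 v.
pose gap r := hessf A beta z v + beta * sin r ^+ 2 * Q.
have gap_cont : {for 0, continuous gap}.
  apply: cvgD; first exact: cvg_cst.
  apply: cvgM; [apply: cvgM; first exact: cvg_cst | exact: cvg_cst].
  exact: (continuous_comp (@continuous_sin R 0) (@exprn_continuous _ 2 _)).
have gap0 : 0 < gap 0 by rewrite /gap sin0 expr0n mulr0 mul0r addr0.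
have sin_gt0 : \forall r \near (0 : R)^'+, 0 < sin r.
  near=> r; apply: sin_gt0_pi; apply/andP; split; near: r;
    [exact: nbhs_right_gt | exact: (nbhs_right_lt (pi_gt0 R))].
have gap_gt0 := cvgr_gt _ (cvg_at_right_filter gap_cont) _ gap0.
near=> r; rewrite -subr_gt0 fobj_second_difference ?cos2Dsin2 //.
apply: mulr_gt0; first by rewrite exprn_gt0 //; near: r.
by near: r; exact: gap_gt0.
Unshelve. all: by end_near.
Qed.

End Objective.

Theorem lemma9 (R : realType) (n : nat) (A : 'M[R]_n) (beta nu : R)
  (z0 : 'cV[R]_n) :
  A^T = A -> 0 < beta -> 0 < nu -> nu <= 1 -> on_sphere z0 ->
  (forall z, region z0 nu z ->
     forall v, tangent z v -> v != 0 -> 0 < hessf A beta z v) ->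
  forall z1 z2,
    local_minimizer (region z0 nu) (fobj A beta) z1 ->
    local_minimizer (region z0 nu) (fobj A beta) z2 ->
    z1 = z2.
Proof.
move=> _ _ _ nu_le1 z0_unit hess_pos z1 z2 z1_min z2_min.
case: (eqVneq z1 z2) => // z1_neq_z2; exfalso; have nu_lt2 : nu < 2 by lra.
have [th [u [th_in u_unit z1_u z2E]]] :=
  region_great_circle z0_unit nu_lt2 z1_min.1 z2_min.1 z1_neq_z2.
subst z2; have /on_sphereE z1_unit := z1_min.1.1.
set g := geodesic z1 u; pose h t := fobj A beta (g t).
have g_in t : 0 <= t <= th -> region z0 nu (g t).
  by move=> t_in; apply: region_geodesic z1_min.1 z2_min.1 => //; lra.
have local_min s : local_minimizer (region z0 nu) (fobj A beta) (g s) ->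
    \forall t \near s, 0 <= t <= th -> h s <= h t.
  by move=> /geodesic_local_minimizer-/(_ z1_unit u_unit z1_u); apply: filterS => t min_t /g_in.
have h_convex c : 0 < c < th -> \forall r \near 0^'+, 2 * h c < h (c + r) + h (c - r).
  move=> /andP[c_gt0 c_lt]; have v_unit := sqnorm_geodesic_dir z1_unit u_unit z1_u c.
  have hess_c : 0 < hessf A beta (g c) (geodesic_dir z1 u c).
    apply: hess_pos; first by apply: g_in; rewrite !ltW.
      exact: dot_geodesic_dir.
    by rewrite -sqnorm_eq0 v_unit oner_neq0.
  apply: filterS (fobj_second_difference_gt0 v_unit hess_c) => r.
  by rewrite /h /g geodesicD geodesicB.
have h_cont : {within `[0, th], continuous h}.
  exact/continuous_subspaceT/continuous_fobj_comp/continuous_geodesic.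
have g0_min : local_minimizer (region z0 nu) (fobj A beta) (g 0) by rewrite /g geodesic0.
have := local_minima_midpoint_convex h_cont (local_min 0 g0_min) (local_min th z2_min) h_convex.
by case/andP: th_in; lra.
Qed.
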